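(* Let $q\ge 2$ and let $n,k$ be positive integers with $5\le k\le n$. Then $$q^n\Big(\frac{q-1}{q}\Big)^{c_2\frac{n}{q^{k-1}}}\,e^{-\frac{c_2}{c_1}\frac{n}{q^{1.5k-1}}}\;\le\; a_q(n,k)\;\le\; q^{\,n- c_3\frac{n-2k}{q^k}},$$ where $c_1=\frac{(q-1)q^{\lceil k/2\rceil-k/2}}{2q}$, $c_2=\frac{\lfloor n/q^{k-1}\rfloor+1}{n/q^{k-1}}$ and $c_3=\frac{(\log_q e)(q-1)^2}{2q^{2}}$.
   Context: $\Sigma_q=\{0,1,\dots,q-1\}$. A vector $\vec a=(a_1,\dots,a_n)\in\Sigma_q^n$ is a $k$-RLL vector if $n<k$ or every window $(a_i,\dots,a_{i+k-1})$, $i\in[1,n-k+1]$, contains a nonzero symbol (i.e. $\vec a$ has no run of $k$ consecutive zeros). $A_q(n,k)$ is the set of $k$-RLL vectors in $\Sigma_q^n$ and $a_q(n,k)=|A_q(n,k)|$. *)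

From mathcomp Require Import all_boot.
From Stdlib Require Import Reals.
Set Implicit Arguments. Unset Strict Implicit. Unset Printing Implicit Defensive.

Definition is_rll (q n k : nat) (a : {ffun 'I_n -> 'I_q}) : bool :=
  (n < k) ||
  [forall i : 'I_n, (i + k <= n) ==>
     [exists j : 'I_n, [&& i <= j, j < i + k & nat_of_ord (a j) != 0]]].

Definition A_q (q n k : nat) : {set {ffun 'I_n -> 'I_q}} :=
  [set a | is_rll k a].

Definition a_q (q n k : nat) : nat := #|A_q q n k|.

Local Open Scope R_scope.

(* rll_c1 = (q-1) q^(ceil(k/2) - k/2) / (2q);  ceil(k/2) = (k+1) %/ 2 *)
Definition rll_c1 (q k : nat) : R :=
  (INR q - 1) * Rpower (INR q) (INR ((k + 1) %/ 2)%N - INR k / 2) / (2 * INR q).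

Definition rll_c2 (q n k : nat) : R :=
  (INR (n %/ q ^ (k - 1))%N + 1) / (INR n / INR q ^ (k - 1)).

(* rll_c3 = (log_q e) (q-1)^2 / (2 q^2), with log_q e = 1 / ln q *)
Definition rll_c3 (q : nat) : R :=
  (1 / ln (INR q)) * (INR q - 1) ^ 2 / (2 * INR q ^ 2).

From Stdlib Require Import Reals Lra Psatz.
From mathcomp Require Import all_boot zify.

Set Implicit Arguments. Unset Strict Implicit. Unset Printing Implicit Defensive.

(* A k-RLL word of length n + 1 >= k consists of j < k zeros, a nonzero letter and a
   k-RLL word of length n - j, so a n := a_q(n, k) satisfies
   a (n+1) = (q - 1) (a n + ... + a (n-k+1)); differencing gives
     a n = q^n (n < k),   a k = q^k - 1,   a (n+1) = q a n - (q - 1) a (n - k) (n >= k).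
   By strong induction a (n+1) >= lam a n with lam = q (1 - q^-k): for n >= k this
   reduces to (q - 1) q^(k-1) a (n-k) <= a n, which follows from a n >= lam^k a (n-k)
   and lam^k >= (q - 1) q^(k-1) (Bernoulli, using k <= q^(k-1)).  Likewise
   a (n+1) <= mu a n for n >= k, with mu = q (1 - (q - 1) q^-(k+1)), since
   a n <= q^k a (n-k).  Hence lam^n <= a n <= mu^(n-k) q^k.  Bernoulli's inequality on
   blocks of q^(k-1) letters gives lam^n >= q^n ((q - 1)/q)^(floor(n/q^(k-1)) + 1), the
   lower bound even without its factor exp(...) <= 1, and 1 - y <= exp(-y) gives the
   upper bound. *)

Definition rll_seq (k : nat) (s : seq nat) : Prop :=
  forall i, i + k <= size s -> exists2 j, i <= j < i + k & nth 0 s j != 0.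

Lemma rll_seq_zeros_nonzero k c x s : c < k -> x != 0 ->
  rll_seq k (rcons (nseq c 0) x ++ s) <-> rll_seq k s.
Proof.
move=> ck xn; set p := rcons _ x.
have sz_p : size p = c.+1 by rewrite size_rcons size_nseq.
have nth_ps j : nth 0 (p ++ s) j = if j < c.+1 then nth 0 p j else nth 0 s (j - c.+1).
  by rewrite nth_cat sz_p.
split=> W i; rewrite ?size_cat ?sz_p => hi.
- have [|j /andP[ij jk]] := W (c.+1 + i); first by rewrite size_cat sz_p; lia.
  rewrite nth_ps (_ : j < c.+1 = false); last by lia.
  by exists (j - c.+1) => //; apply/andP; lia.
- have [ic | ci] := leqP i c.
    exists c; first by apply/andP; lia.
    by rewrite nth_ps ltnSn nth_rcons size_nseq ltnn eqxx.
  have [|j /andP[ij jk] nz] := W (i - c.+1); first by lia.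
  exists (j + c.+1); first by apply/andP; lia.
  by rewrite nth_ps (_ : j + c.+1 < c.+1 = false) ?addnK //; lia.
Qed.

Fixpoint rll_from (k c : nat) (s : seq nat) : bool :=
  if s is x :: s' then
    if x == 0 then (c.+1 < k) && rll_from k c.+1 s' else rll_from k 0 s'
  else true.

Lemma rll_fromP k c s : c < k -> rll_from k c s <-> rll_seq k (nseq c 0 ++ s).
Proof.
elim: s c => [|x s IH] c ck /=.
  by split=> // _ i; rewrite cats0 size_nseq; lia.
have [-> | xn] := eqVneq x 0; last first.
  by rewrite -cat_rcons rll_seq_zeros_nonzero // -(IH 0) //; lia.
have -> : nseq c 0 ++ 0 :: s = nseq c.+1 0 ++ s by rewrite -addn1 nseqD -catA.
have [ck1 | kc] := ltnP c.+1 k; first exact: IH.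
split=> // W; have [|j /andP[_ jk]] := W 0; first by rewrite size_cat size_nseq; lia.
by rewrite nth_cat size_nseq nth_nseq (_ : j < c.+1); last by lia.
Qed.

Fixpoint words (q n : nat) : seq (seq nat) :=
  if n is n'.+1 then [seq x :: w | x <- iota 0 q, w <- words q n'] else [:: [::]].

Lemma mem_words q n s : (s \in words q n) = (size s == n) && all (fun x => x < q) s.
Proof.
elim: n s => [|n IH] [|x s] //=; first by apply/negbTE/allpairsP => -[[? ?] [_ _]].
apply/allpairsP/idP => [[[y w] /= [y_q w_n [-> ->]]] | /and3P[sz xq sq]].
  by move: w_n y_q; rewrite IH mem_iota => /andP[/eqP -> ->] ?; rewrite eqxx andbT; lia.
by exists (x, s); rewrite /= mem_iota IH -eqSS sz; split => //; lia.
Qed.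

Lemma uniq_words q n : uniq (words q n).
Proof.
elim: n => //= n IH; apply: allpairs_uniq => //; first exact: iota_uniq.
by move=> [? ?] [? ?] _ _ /= [-> ->].
Qed.

Fixpoint rll_count (q k n c : nat) : nat :=
  if n is n'.+1 then
    (if c.+1 < k then rll_count q k n' c.+1 else 0) + (q - 1) * rll_count q k n' 0
  else 1.

Lemma count_rll_from_cons k c (s : seq nat) (W : seq (seq nat)) :
  all (fun x => x != 0) s ->
  count (rll_from k c) [seq x :: w | x <- s, w <- W] = size s * count (rll_from k 0) W.
Proof.
elim: s => //= x s IH /andP[xn s_nz].
rewrite count_cat IH // count_map mulSn; congr (_ + _).
by apply: eq_count => w /=; rewrite (negbTE xn).
Qed.

Lemma count_rll_from_words q k n c : 0 < q ->
  count (rll_from k c) (words q n) = rll_count q k n c.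
Proof.
case: q => // q _; elim: n c => [|n IH] c //=.
rewrite count_cat count_map count_rll_from_cons; last by apply/allP => x; rewrite mem_iota; lia.
rewrite size_iota IH subn1 /=; congr (_ + _).
case: ifP => ck; first by rewrite -IH; apply: eq_count => w /=; rewrite ck.
by rewrite (eq_count (a2 := pred0)) ?count_pred0 // => w /=; rewrite ck.
Qed.

Definition word_of q n (a : {ffun 'I_n -> 'I_q}) : seq nat := [seq val (a i) | i <- enum 'I_n].

Lemma size_word_of q n (a : {ffun 'I_n -> 'I_q}) : size (word_of a) = n.
Proof. by rewrite size_map size_enum_ord. Qed.

Lemma nth_word_of q n (a : {ffun 'I_n -> 'I_q}) (i : 'I_n) : nth 0 (word_of a) i = a i.
Proof. by rewrite (nth_map i) ?size_enum_ord // nth_ord_enum. Qed.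

Lemma is_rll_word q n k (a : {ffun 'I_n -> 'I_q}) : 0 < k ->
  is_rll k a <-> rll_seq k (word_of a).
Proof.
move=> k_gt0; rewrite /is_rll; split => [/orP[nk | /forallP W] i | W].
- by rewrite size_word_of; lia.
- rewrite size_word_of => hi; have i_n : i < n by lia.
  have /implyP /(_ hi) /existsP [j /and3P[ij jk nz]] := W (Ordinal i_n).
  by exists j; [apply/andP | rewrite nth_word_of].
apply/orP; right; apply/forallP => i; apply/implyP => hi.
have [|j /andP[ij jk] nz] := W i; first by rewrite size_word_of.
have j_n : j < n.
  by rewrite -(size_word_of a) ltnNge; apply: contra nz => /(nth_default 0) ->.
by apply/existsP; exists (Ordinal j_n); rewrite ij jk -(nth_word_of a).
Qed.

Lemma perm_words q n :
  perm_eq [seq word_of a | a <- enum {ffun 'I_n -> 'I_q}] (words q n).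
Proof.
apply: uniq_perm; last 1 first.
- move=> s; apply/mapP/idP => [[a _ ->] | ].
    rewrite mem_words size_word_of eqxx /=.
    by apply/allP => x /mapP[i _ ->]; apply: ltn_ord.
  rewrite mem_words => /andP[/eqP sz /all_nthP s_q].
  have a_q (i : 'I_n) : nth 0 s i < q by apply: s_q; rewrite sz.
  exists [ffun i => Ordinal (a_q i)]; first by rewrite mem_enum.
  apply: (@eq_from_nth _ 0) => [|i]; first by rewrite sz; symmetry; apply: size_word_of.
  rewrite sz => i_n.
  by rewrite (nth_word_of _ (Ordinal i_n)) ffunE.
- rewrite map_inj_uniq ?enum_uniq // => a b eq_ab.
  by apply/ffunP => i; apply/val_inj; rewrite /= -!nth_word_of eq_ab.
- exact: uniq_words.
Qed.

Lemma a_q_count q n k : 0 < q -> 0 < k -> a_q q n k = rll_count q k n 0.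
Proof.
move=> q_gt0 k_gt0; rewrite -count_rll_from_words // -(permP (perm_words q n)) count_map.
rewrite enumT /a_q /A_q cardsE cardE /enum_mem size_filter; apply: eq_count => a /=.
have rllP := rll_fromP (word_of a) k_gt0.
by apply/idP/idP => [/(is_rll_word _ k_gt0)/rllP | /rllP/(is_rll_word _ k_gt0)].
Qed.

Lemma rll_countS q k n c : rll_count q k n.+1 c =
  (if c.+1 < k then rll_count q k n c.+1 else 0) + (q - 1) * rll_count q k n 0.
Proof. by []. Qed.

Lemma rll_count_short q k n c : 0 < q -> n + c < k -> rll_count q k n c = q ^ n.
Proof.
case: q => // q _; elim: n c => [|n IH] c nc //.
by rewrite rll_countS ifT ?IH ?expnS ?subSS ?subn0; lia.
Qed.

Lemma rll_count_edge q k n c : 0 < q -> 0 < n -> n + c = k ->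
  (rll_count q k n c).+1 = q ^ n.
Proof.
case: q => // q _; elim: n c => [|[|n] IH] c // _ nc.
  by rewrite rll_countS ifF /= ?muln1 ?expn1 ?subSS ?subn0; lia.
have e : (rll_count q.+1 k n.+1 c.+1).+1 = q.+1 ^ n.+1 by apply: IH; lia.
rewrite rll_countS ifT; last by lia.
rewrite (@rll_count_short _ _ _ 0) //; last by lia.
by rewrite subSS subn0 [RHS]expnS -e; nia.
Qed.

Lemma rll_count_sum q k n d : d < k -> d <= n ->
  rll_count q k n.+1 (k - d.+1) = (q - 1) * \sum_(i < d.+1) rll_count q k (n - i) 0.
Proof.
elim: d n => [|d IH] n dk dn.
  by rewrite rll_countS ifF ?big_ord1 ?subn0 //; lia.
case: n dn => // n dn.
rewrite rll_countS ifT; last by lia.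
rewrite (_ : (k - d.+2).+1 = k - d.+1); last by lia.
rewrite IH; try lia.
by rewrite [in RHS]big_ord_recl subn0 mulnDr [RHS]addnC; congr (_ + _).
Qed.

Lemma rll_count_rec q k n : 0 < k -> k <= n ->
  rll_count q k n.+1 0 + (q - 1) * rll_count q k (n - k) 0 = q * rll_count q k n 0.
Proof.
case: k => // d _; case: n => // m dm.
have e1 := @rll_count_sum q d.+1 m.+1 d (ltnSn d) (ltnW dm).
have e2 := @rll_count_sum q d.+1 m d (ltnSn d) dm.
rewrite subnn big_ord_recl subn0 in e1; rewrite subnn big_ord_recr /= -rll_countS in e2.
rewrite (eq_bigr (fun i : 'I_d => rll_count q d.+1 (m - i) 0)) in e1; last first.
  by move=> i _; rewrite lift0.
rewrite subSS {}e1 {}e2.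
case: q => [|q]; rewrite ?subSS ?subn0; nia.
Qed.

Lemma a_q_short q n k : 0 < q -> n < k -> a_q q n k = q ^ n.
Proof. by move=> q_gt0 nk; rewrite a_q_count ?rll_count_short ?addn0 //; lia. Qed.

Lemma a_q_full q k : 0 < q -> 0 < k -> (a_q q k k).+1 = q ^ k.
Proof. by move=> q_gt0 k_gt0; rewrite a_q_count ?rll_count_edge ?addn0. Qed.

Lemma a_q_rec q n k : 0 < q -> 0 < k -> k <= n ->
  a_q q n.+1 k + (q - 1) * a_q q (n - k) k = q * a_q q n k.
Proof. by move=> q_gt0 k_gt0 kn; rewrite !a_q_count ?rll_count_rec. Qed.

Local Open Scope R_scope.

Lemma exp_le x y : x <= y -> exp x <= exp y.
Proof. by case/Rle_lt_or_eq_dec => [/exp_increasing/Rlt_le | ->]; [| apply: Rle_refl]. Qed.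

Lemma pow_exp a n : exp a ^ n = exp (INR n * a).
Proof.
elim: n => [|n IH]; first by rewrite Rmult_0_l exp_0.
by rewrite -tech_pow_Rmult IH -exp_plus S_INR; f_equal; ring.
Qed.

Lemma bernoulli_ineq x n : x <= 1 -> 1 - INR n * x <= (1 - x) ^ n.
Proof.
move=> x_le1; elim: n => [|n IH]; first by rewrite /=; lra.
rewrite -tech_pow_Rmult S_INR.
have : (1 - x) * (1 - INR n * x) <= (1 - x) * (1 - x) ^ n by apply: Rmult_le_compat_l; lra.
have := pos_INR n; nra.
Qed.

Lemma pow_one_sub_le_exp y n : y <= 1 -> (1 - y) ^ n <= exp (- (INR n * y)).
Proof.
move=> y_le1; rewrite (_ : - (INR n * y) = INR n * - y); last by ring.
by rewrite -pow_exp; apply: pow_incr; have := exp_ineq1_le (- y); lra.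
Qed.

Lemma Rle_pow_le1 x m n : 0 <= x <= 1 -> (m <= n)%N -> x ^ n <= x ^ m.
Proof.
move=> x01 /subnK <-; rewrite pow_add.
have : x ^ (n - m) <= 1 by rewrite -(pow1 (n - m)); apply: pow_incr; lra.
have : 0 <= x ^ m by apply: pow_le; lra.
nra.
Qed.

Lemma pow_one_sub_blocks x N m n : 0 <= x <= 1 -> INR N * x <= 1 -> (n <= m * N)%N ->
  (1 - INR N * x) ^ m <= (1 - x) ^ n.
Proof.
move=> x01 Nx_le1 n_le.
apply: Rle_trans (_ : (1 - x) ^ (N * m) <= _); last by apply: Rle_pow_le1; [lra | rewrite mulnC].
by rewrite pow_mult; apply: pow_incr; have := bernoulli_ineq N (proj2 x01); lra.
Qed.

Lemma Rle_mul_inv_r a b c : 0 < c -> a * c <= b -> a <= b * / c.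
Proof.
move=> c_gt0 h; apply: (Rmult_le_reg_r c) => //.
by rewrite (Rmult_assoc b) Rinv_l; [lra | apply: Rgt_not_eq].
Qed.

Lemma Rle_mul_inv_l a b c : 0 < c -> a <= b * c -> a * / c <= b.
Proof.
move=> c_gt0 h; apply: (Rmult_le_reg_r c) => //.
by rewrite (Rmult_assoc a) Rinv_l; [lra | apply: Rgt_not_eq].
Qed.

Lemma inv_pow_le1 x m : 1 <= x -> / x ^ m <= 1.
Proof.
by move=> x_ge1; rewrite -Rinv_1; apply: Rinv_le_contravar; [lra | apply: pow_R1_Rle].
Qed.

Lemma pred_div_pow_le1 x m : 1 <= x -> (x - 1) / x ^ m.+1 <= 1.
Proof.
move=> x_ge1; apply: Rle_mul_inv_l; first by apply: pow_lt; lra.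
by rewrite Rmult_1_l -tech_pow_Rmult; have := pow_R1_Rle _ m x_ge1; nra.
Qed.

Lemma pow_mul_le_of_step l (g : nat -> R) m d : 0 <= l ->
  (forall i, (m <= i < m + d)%N -> l * g i <= g i.+1) -> l ^ d * g m <= g (m + d)%N.
Proof.
move=> l_ge0 step; elim: d => [|d IH] /= in step *; first by rewrite addn0; lra.
have h1 := step (m + d)%N; have h2 : l ^ d * g m <= g (m + d)%N.
  by apply: IH => i /andP[mi id]; apply: step; apply/andP; lia.
rewrite addnS; have : (m <= m + d < m + d.+1)%N by apply/andP; lia.
move/h1; have := pow_le l d l_ge0; nra.
Qed.

Lemma le_pow_mul_of_step l (g : nat -> R) m d : 0 <= l ->
  (forall i, (m <= i < m + d)%N -> g i.+1 <= l * g i) -> g (m + d)%N <= l ^ d * g m.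
Proof.
move=> l_ge0 step; elim: d => [|d IH] /= in step *; first by rewrite addn0; lra.
have h1 := step (m + d)%N; have h2 : g (m + d)%N <= l ^ d * g m.
  by apply: IH => i /andP[mi id]; apply: step; apply/andP; lia.
rewrite addnS; have : (m <= m + d < m + d.+1)%N by apply/andP; lia.
move/h1; have := pow_le l d l_ge0; nra.
Qed.

Section Growth.

Variables (Q : R) (k : nat) (g : nat -> R).
Hypotheses (Q_ge1 : 1 <= Q) (k_gt0 : (0 < k)%N) (g_ge0 : forall n, 0 <= g n).
Hypotheses (g_short : forall n, (n < k)%N -> g n = Q ^ n) (g_full : g k = Q ^ k - 1).
Hypothesis g_rec : forall n, (k <= n)%N -> g n.+1 = Q * g n - (Q - 1) * g (n - k)%N.

Let Qpow_gt0 m : 0 < Q ^ m. Proof. by apply: pow_lt; lra. Qed.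

Let Qpow_pred : Q ^ k = Q * Q ^ (k - 1).
Proof. by case: (k) k_gt0 => // k' _; rewrite subSS subn0. Qed.

Local Notation lam := (Q * (1 - / Q ^ k)).
Local Notation mu := (Q * (1 - (Q - 1) / Q ^ k.+1)).

Let lam_ge0 : 0 <= lam.
Proof. have := inv_pow_le1 k Q_ge1; nra. Qed.

Lemma lower_rate_pow_ge : INR k <= Q ^ (k - 1) -> (Q - 1) * Q ^ (k - 1) <= lam ^ k.
Proof.
move=> k_le; rewrite Rpow_mult_distr.
have e : Q ^ k * (INR k * / Q ^ k) = INR k by field; apply/Rgt_not_eq/Qpow_gt0.
have : Q ^ k * (1 - INR k * / Q ^ k) <= Q ^ k * (1 - / Q ^ k) ^ k.
  by apply/Rmult_le_compat_l/bernoulli_ineq/inv_pow_le1 => //; apply/Rlt_le/Qpow_gt0.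
rewrite Qpow_pred in e *; nra.
Qed.

Lemma lower_rate_mul_le : INR k <= Q ^ (k - 1) -> forall n, lam * g n <= g n.+1.
Proof.
move=> k_le; elim/ltn_ind => n IH.
have [n1k | kn1] := ltnP n.+1 k.
  rewrite !g_short //; last by lia.
  have lam_le : lam <= Q.
    have : 0 < / Q ^ k by apply/Rinv_0_lt_compat/Qpow_gt0.
    nra.
  have := Qpow_gt0 n; rewrite -tech_pow_Rmult; nra.
have [kn | nk] := leqP k n; last first.
  have def_k : k = n.+1 by lia.
  rewrite -def_k g_full g_short; last by lia.
  rewrite def_k -tech_pow_Rmult; apply: Req_le; field; split; [apply/Rgt_not_eq/Qpow_gt0 | lra].
have chain : lam ^ k * g (n - k)%N <= g n.
  rewrite -{2}(subnK kn); apply: pow_mul_le_of_step => // i /andP[_ ik].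
  by apply: IH; lia.
have : (Q - 1) * g (n - k)%N <= g n * / Q ^ (k - 1).
  apply: Rle_mul_inv_r; first exact: Qpow_gt0.
  apply: Rle_trans chain; rewrite Rmult_assoc (Rmult_comm (g _)) -Rmult_assoc.
  exact/Rmult_le_compat_r/lower_rate_pow_ge.
have -> : lam = Q - / Q ^ (k - 1).
  by rewrite Qpow_pred; field; split; [apply/Rgt_not_eq/Qpow_gt0 | lra].
rewrite g_rec //; lra.
Qed.

Lemma lower_rate_pow_le : INR k <= Q ^ (k - 1) -> forall n, lam ^ n <= g n.
Proof.
move=> k_le n; have := @pow_mul_le_of_step lam g 0 n lam_ge0.
by rewrite g_short // Rmult_1_r; apply => i _; apply: lower_rate_mul_le.
Qed.

Lemma succ_le_mul n : g n.+1 <= Q * g n.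
Proof.
have [n1k | kn1] := ltnP n.+1 k.
  by rewrite !g_short ?(ltnW n1k) // -tech_pow_Rmult; apply: Rle_refl.
have [kn | nk] := leqP k n; first by rewrite g_rec //; have := g_ge0 (n - k)%N; nra.
have def_k : k = n.+1 by lia.
rewrite -def_k g_full g_short; last by lia.
by rewrite def_k -tech_pow_Rmult; lra.
Qed.

Lemma succ_le_upper_rate n : (k <= n)%N -> g n.+1 <= mu * g n.
Proof.
move=> kn; have : g n * / Q ^ k <= g (n - k)%N.
  apply: Rle_mul_inv_l; first exact: Qpow_gt0.
  rewrite Rmult_comm -{1}(subnK kn).
  by apply: le_pow_mul_of_step => [|i _]; [lra | exact: succ_le_mul].
have -> : mu = Q - (Q - 1) * / Q ^ k.
  by rewrite -tech_pow_Rmult; field; split; [apply/Rgt_not_eq/Qpow_gt0 | lra].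
rewrite g_rec //; nra.
Qed.

Lemma le_upper_rate_pow n : (k <= n)%N -> g n <= mu ^ (n - k) * Q ^ k.
Proof.
move=> kn; have mu_ge0 : 0 <= mu by have := pred_div_pow_le1 k Q_ge1; nra.
rewrite -{1}(subnKC kn); apply: Rle_trans (@le_pow_mul_of_step _ g k (n - k) mu_ge0 _) _.
  by move=> i /andP[ki _]; apply: succ_le_upper_rate.
by rewrite g_full; have := pow_le _ (n - k) mu_ge0; nra.
Qed.

End Growth.

Lemma Nat_pow_expn m n : Nat.pow m n = (m ^ n)%N.
Proof. by elim: n => // n IH; rewrite expnS -IH. Qed.

Lemma INR_expn m n : INR (m ^ n)%N = INR m ^ n.
Proof. by rewrite -Nat_pow_expn pow_INR. Qed.

Lemma INR_ge2 q : (2 <= q)%N -> 2 <= INR q.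
Proof. by move=> q_ge2; have := le_INR 2 q (elimT leP q_ge2); rewrite /=; lra. Qed.

Section RealCount.

Variables q k : nat.
Hypotheses (q_ge2 : (2 <= q)%N) (k_gt0 : (0 < k)%N).

Let Q_ge1 : 1 <= INR q. Proof. by have := INR_ge2 q_ge2; lra. Qed.

Let a n := INR (a_q q n k).

Let a_ge0 n : 0 <= a n. Proof. exact: pos_INR. Qed.

Let a_short n : (n < k)%N -> a n = INR q ^ n.
Proof. by move=> nk; rewrite /a a_q_short ?INR_expn //; lia. Qed.

Let a_full : a k = INR q ^ k - 1.
Proof.
have := f_equal INR (a_q_full (ltnW q_ge2) k_gt0).
by rewrite INR_expn S_INR /a; lra.
Qed.

Let a_rec n : (k <= n)%N -> a n.+1 = INR q * a n - (INR q - 1) * a (n - k)%N.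
Proof.
move=> kn; have := f_equal INR (a_q_rec (ltnW q_ge2) k_gt0 kn).
by rewrite plus_INR !mult_INR minus_INR ?INR_1 /a; [lra | lia].
Qed.

Lemma a_q_lower n :
  INR q ^ n * ((INR q - 1) / INR q) ^ (n %/ q ^ (k - 1)).+1 <= INR (a_q q n k).
Proof.
have Qpow_gt0 m : 0 < INR q ^ m by apply: pow_lt; lra.
have k_le : INR k <= INR q ^ (k - 1).
  rewrite -INR_expn; apply/le_INR/leP; have := ltn_expl (k - 1) q_ge2; lia.
apply: (Rle_trans _ _ _ _ (lower_rate_pow_le Q_ge1 k_gt0 a_ge0 a_short a_full a_rec k_le n)).
rewrite Rpow_mult_distr; apply: Rmult_le_compat_l; first exact/Rlt_le/Qpow_gt0.
have block : INR (q ^ (k - 1)) * / INR q ^ k = / INR q.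
  rewrite INR_expn; case: (k) k_gt0 => // k' _; rewrite subSS subn0 -tech_pow_Rmult.
  by field; split; [lra | apply/Rgt_not_eq/Qpow_gt0].
have -> : (INR q - 1) / INR q = 1 - INR (q ^ (k - 1)) * / INR q ^ k.
  by rewrite block; field; lra.
apply: pow_one_sub_blocks; rewrite ?block.
- by split; [apply/Rlt_le/Rinv_0_lt_compat | apply: inv_pow_le1].
- by have := inv_pow_le1 1 Q_ge1; rewrite pow_1.
- by apply: ltnW; apply: ltn_ceil; rewrite expn_gt0; lia.
Qed.

Lemma a_q_upper n : (k <= n)%N ->
  INR (a_q q n k) <= INR q ^ n * exp (- (INR (n - k) * ((INR q - 1) / INR q ^ k.+1))).
Proof.
move=> kn.
apply: (Rle_trans _ _ _ (le_upper_rate_pow Q_ge1 k_gt0 a_ge0 a_short a_full a_rec kn)).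
have -> : INR q ^ n = INR q ^ (n - k) * INR q ^ k by rewrite -pow_add plusE subnK.
rewrite Rpow_mult_distr.
have := pow_one_sub_le_exp (n - k) (pred_div_pow_le1 k Q_ge1).
have : 0 <= INR q ^ (n - k) * INR q ^ k by apply: Rmult_le_pos; apply: pow_le; lra.
nra.
Qed.

End RealCount.

Lemma rll_c2_mul q n k : (0 < q)%N -> (0 < n)%N ->
  rll_c2 q n k * (INR n / INR q ^ (k - 1)) = INR (n %/ q ^ (k - 1)).+1.
Proof.
move=> q_gt0 n_gt0; have Q_gt0 : 0 < INR q by apply/lt_0_INR/ltP.
rewrite /rll_c2 Nat_pow_expn S_INR; field.
by split; [apply/Rgt_not_eq/pow_lt | apply/not_0_INR; lia].
Qed.

Lemma rll_c1_gt0 q k : (2 <= q)%N -> 0 < rll_c1 q k.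
Proof.
move/INR_ge2 => Q_ge2; apply: Rdiv_lt_0_compat; last lra.
by apply: Rmult_lt_0_compat; [lra | apply: exp_pos].
Qed.

Lemma rll_c2_gt0 q n k : (0 < q)%N -> (0 < n)%N -> 0 < rll_c2 q n k.
Proof.
move=> /ltP/lt_0_INR Q_gt0 /ltP/lt_0_INR n_gt0; rewrite /rll_c2 Nat_pow_expn.
apply: Rdiv_lt_0_compat; first by have := pos_INR (n %/ q ^ (k - 1)); lra.
by apply: Rdiv_lt_0_compat => //; apply: pow_lt.
Qed.

Lemma rll_correction_le1 q n k : (2 <= q)%N -> (0 < n)%N ->
  exp (- (rll_c2 q n k / rll_c1 q k) * (INR n / Rpower (INR q) (3 / 2 * INR k - 1))) <= 1.
Proof.
move=> q_ge2 n_gt0; rewrite -[X in _ <= X]exp_0; apply: exp_le.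
have : 0 < rll_c2 q n k / rll_c1 q k.
  by apply: Rdiv_lt_0_compat; [apply: rll_c2_gt0 => //; lia | exact: rll_c1_gt0].
have : 0 < INR n / Rpower (INR q) (3 / 2 * INR k - 1).
  by apply: Rdiv_lt_0_compat; [apply/lt_0_INR/ltP | apply: exp_pos].
nra.
Qed.

Lemma rll_c3_bound q n k : (2 <= q)%N -> (k <= n)%N ->
  INR q ^ n * exp (- (INR (n - k) * ((INR q - 1) / INR q ^ k.+1)))
  <= Rpower (INR q) (INR n - rll_c3 q * ((INR n - 2 * INR k) / INR q ^ k)).
Proof.
move=> /INR_ge2 Q_ge2 kn; have Qk_gt0 : 0 < INR q ^ k by apply: pow_lt; lra.
have Q2_gt0 : 0 < INR q ^ 2 by apply: pow_lt; lra.
have lnQ_gt0 : 0 < ln (INR q) by rewrite -ln_1; apply: ln_increasing; lra.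
rewrite /Rpower Rmult_plus_distr_r exp_plus -/(Rpower _ (INR n)) Rpower_pow; last by lra.
apply: Rmult_le_compat_l; first by apply: pow_le; lra.
apply: exp_le; rewrite minus_INR; last exact/leP.
have nk : INR k <= INR n by apply/le_INR/leP.
have -> : - (rll_c3 q * ((INR n - 2 * INR k) / INR q ^ k)) * ln (INR q) =
          - ((INR q - 1) ^ 2 * (INR n - 2 * INR k) / (2 * INR q ^ 2 * INR q ^ k)).
  by rewrite /rll_c3; field; split; lra.
have -> : (INR n - INR k) * ((INR q - 1) / INR q ^ k.+1) =
          2 * INR q * (INR q - 1) * (INR n - INR k) / (2 * INR q ^ 2 * INR q ^ k).
  by rewrite -tech_pow_Rmult; field; split; lra.
apply: Ropp_le_contravar; rewrite /Rdiv; apply: Rmult_le_compat_r.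
  by apply/Rlt_le/Rinv_0_lt_compat/Rmult_lt_0_compat => //; lra.
(* 2 Q (Q - 1) (n - k) - (Q - 1)^2 (n - 2 k) = (Q - 1) (Q + 1) (n - k) + (Q - 1)^2 k *)
have : 0 <= (INR q - 1) ^ 2 * INR k by apply: Rmult_le_pos; [apply: pow2_ge_0 | apply: pos_INR].
have : 0 <= (INR q - 1) * (INR q + 1) * (INR n - INR k).
  by apply: Rmult_le_pos; [apply: Rmult_le_pos |]; lra.
lra.
Qed.

Theorem lemma1 (q n k : nat) (hq : (2 <= q)%N) (hk : (5 <= k)%N) (hkn : (k <= n)%N) :
  (INR q ^ n
     * Rpower ((INR q - 1) / INR q) (rll_c2 q n k * (INR n / INR q ^ (k - 1)))
     * exp (- (rll_c2 q n k / rll_c1 q k) * (INR n / Rpower (INR q) (3 / 2 * INR k - 1)))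
   <= INR (a_q q n k)
   <= Rpower (INR q) (INR n - rll_c3 q * ((INR n - 2 * INR k) / INR q ^ k)))%R.
Proof.
have k_gt0 : (0 < k)%N by lia.
split; last exact: Rle_trans (a_q_upper hq k_gt0 hkn) (rll_c3_bound hq hkn).
apply: Rle_trans (a_q_lower hq k_gt0 n).
have Q_ge2 := INR_ge2 hq.
rewrite rll_c2_mul ?Rpower_pow; [| by apply: Rdiv_lt_0_compat; lra | lia | lia].
rewrite -[X in _ <= X]Rmult_1_r; apply: Rmult_le_compat_l.
  by apply: Rmult_le_pos; apply: pow_le; [| apply/Rlt_le/Rdiv_lt_0_compat]; lra.
by apply: rll_correction_le1; lia.
Qed.
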